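(* Let $B$ be an augmented bisimplicial groupoid with a right augmented abacus map $f$, and let $\tilde B$ be obtained from $B$ by replacing, for $i,j\ge0$, each top vertical face map $e_{i+1}:B_{i+1,j}\to B_{i,j}$ by $\tilde e_{i+1}:=d_0\circ f_{i,j}$ (keeping all other structure maps, the augmentation row $B_{-1,\bullet}$ and the augmentation maps). Then $v:\tilde B_{0,\bullet}\to B_{-1,\bullet}$ is an augmentation map; in particular $v\circ e_0=v\circ\tilde e_1$ as maps $\tilde B_{1,j}\to B_{-1,j}$ for all $j\ge0$.
   Context: An augmented bisimplicial groupoid is a functor $(\Delta_+^{\mathrm{op}}\times\Delta_+^{\mathrm{op}})\setminus\{(-1,-1)\}\to\mathbf{Grpd}$; it consists of a bisimplicial groupoid $(B_{i,j})_{i,j\ge0}$ together with simplicial groupoids $B_{\bullet,-1}$, $B_{-1,\bullet}$ and augmentation maps $u:B_{i,0}\to B_{i,-1}$, $v:B_{0,j}\to B_{-1,j}$ compatible with the structure maps (in particular $v$ commutes with horizontal face maps). Horizontal maps: $d_k:B_{i,j}\to B_{i,j-1}$, $s_k$; vertical maps: $e_k:B_{i,j}\to B_{i-1,j}$, $t_k$; on $B_{i,j}$, $e_\top=e_i$, $t_\top=t_i$, $d_\bot=d_0$. An abacus map is a family $f_{i,j}:B_{i+1,j}\to B_{i,j+1}$ ($i,j\ge0$) such that each $f_{i,\bullet}:B_{i+1,\bullet}\to\mathrm{Dec}_\bot(B_{i,\bullet})$ is simplicial (where $\mathrm{Dec}_\bot$ shifts down by one and deletes $d_0,s_0$), each $f_{\bullet,j}:\mathrm{Dec}_\top(B_{\bullet,j})\to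 B_{\bullet,j+1}$ commutes with all structure maps except top face maps (where $\mathrm{Dec}_\top$ shifts down by one and deletes last face and degeneracy maps), and $d_\bot f_{i,j}t_\top=\mathrm{id}$. It is right augmented if there are maps $f_{-1,j}:B_{0,j}\to B_{-1,j+1}$ ($j\ge0$) with $f_{-1,j}\circ e_0=v\circ f_{0,j}$ as maps $B_{1,j}\to B_{-1,j+1}$, and $d_0\circ f_{-1,j}=v$ as maps $B_{0,j}\to B_{-1,j}$. *)

Record Groupoid := {
  ob : Type;
  hom : ob -> ob -> Type;
  gid : forall x, hom x x;
  gcomp : forall x y z, hom y z -> hom x y -> hom x z;
  gcomp_id_l : forall x y (h : hom x y), gcomp x y y (gid y) h = h;
  gcomp_id_r : forall x y (h : hom x y), gcomp x x y h (gid x) = h;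
  gcomp_assoc : forall w x y z (f : hom y z) (g : hom x y) (h : hom w x),
      gcomp w x z (gcomp x y z f g) h = gcomp w y z f (gcomp w x y g h);
  ginv : forall x y (h : hom x y), exists h' : hom y x,
      gcomp x y x h' h = gid x /\ gcomp y x y h h' = gid y
}.
Arguments hom {g} _ _ : rename.
Arguments gid {g} x : rename.
Arguments gcomp {g x y z} _ _ : rename.

Record Functor (G H : Groupoid) := {
  fobj : ob G -> ob H;
  fmap : forall x y, @hom G x y -> @hom H (fobj x) (fobj y);
  fmap_id : forall x, fmap x x (gid x) = gid (fobj x);
  fmap_comp : forall x y z (g : @hom G y z) (h : @hom G x y),
      fmap x z (gcomp g h) = gcomp (fmap y z g) (fmap x y h)
}.
Arguments fobj {G H} _ _.
Arguments fmap {G H} _ {x y} _.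
Arguments fmap_id {G H} _ _.
Arguments fmap_comp {G H} _ {x y z} _ _.

Lemma fcomp_id_proof {G H K : Groupoid} (F2 : Functor H K) (F1 : Functor G H) :
  forall x, fmap F2 (fmap F1 (gid x)) = gid (fobj F2 (fobj F1 x)).
Proof. intros x. rewrite (fmap_id F1), (fmap_id F2). reflexivity. Qed.

Lemma fcomp_comp_proof {G H K : Groupoid} (F2 : Functor H K) (F1 : Functor G H) :
  forall x y z (g : @hom G y z) (h : @hom G x y),
    fmap F2 (fmap F1 (gcomp g h)) = gcomp (fmap F2 (fmap F1 g)) (fmap F2 (fmap F1 h)).
Proof. intros. rewrite (fmap_comp F1), (fmap_comp F2). reflexivity. Qed.

Definition fcomp {G H K : Groupoid} (F2 : Functor H K) (F1 : Functor G H) : Functor G K :=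
  {| fobj := fun x => fobj F2 (fobj F1 x);
     fmap := fun x y h => fmap F2 (fmap F1 h);
     fmap_id := fcomp_id_proof F2 F1;
     fmap_comp := fcomp_comp_proof F2 F1 |}.

Lemma fid_comp_proof (G : Groupoid) :
  forall x y z (g : @hom G y z) (h : @hom G x y), gcomp g h = gcomp g h.
Proof. reflexivity. Qed.

Definition fidentity (G : Groupoid) : Functor G G :=
  {| fobj := fun x => x;
     fmap := fun x y h => h;
     fmap_id := fun x => eq_refl;
     fmap_comp := fid_comp_proof G |}.

Definition hcast {G : Groupoid} {a a' b b' : ob G} (p : a = a') (q : b = b')
  (h : hom a b) : hom a' b' :=
  match p in _ = x, q in _ = y return hom x y with eq_refl, eq_refl => h end.

Definition feq {G H : Groupoid} (F1 F2 : Functor G H) : Prop :=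
  exists p : forall x, fobj F1 x = fobj F2 x,
    forall x y (h : @hom G x y), hcast (p x) (p y) (fmap F1 h) = fmap F2 h.

Notation "F2 \o F1" := (fcomp F2 F1) (at level 40, left associativity).
Notation "F1 =F F2" := (feq F1 F2) (at level 70).

(* Out-of-range indices k are meaningless and unconstrained. *)
Definition simplicial_ids (X : nat -> Groupoid)
  (d : forall n : nat, nat -> Functor (X (S n)) (X n))
  (s : forall n : nat, nat -> Functor (X n) (X (S n))) : Prop :=
  (forall n i j, i < j -> j <= S (S n) ->
     d n i \o d (S n) j =F d n (pred j) \o d (S n) i) /\
  (forall n i j, i < j -> j <= S n ->
     d (S n) i \o s (S n) j =F s n (pred j) \o d n i) /\
  (forall n j, j <= n ->
     d n j \o s n j =F fidentity (X n) /\ d n (S j) \o s n j =F fidentity (X n)) /\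
  (forall n i j, S j < i -> i <= S (S n) ->
     d (S n) i \o s (S n) j =F s n j \o d n (pred i)) /\
  (forall n i j, i <= j -> j <= n ->
     s (S n) i \o s n j =F s (S n) (S j) \o s n i).

(* B i j = B_{i,j} (i,j >= 0); horizontal maps d i j k : B_{i,j+1} -> B_{i,j},
   s i j k : B_{i,j} -> B_{i,j+1}; vertical maps e i j k : B_{i+1,j} -> B_{i,j},
   t i j k : B_{i,j} -> B_{i+1,j}. *)
Record BisimpData := {
  B : nat -> nat -> Groupoid;
  hd : forall i j : nat, nat -> Functor (B i (S j)) (B i j);
  hs : forall i j : nat, nat -> Functor (B i j) (B i (S j));
  ve : forall i j : nat, nat -> Functor (B (S i) j) (B i j);
  vt : forall i j : nat, nat -> Functor (B i j) (B (S i) j);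
  (* augmentation row B_{-1,j} with its horizontal simplicial structure *)
  Bv : nat -> Groupoid;
  dv : forall j : nat, nat -> Functor (Bv (S j)) (Bv j);
  sv : forall j : nat, nat -> Functor (Bv j) (Bv (S j));
  (* augmentation column B_{i,-1} with its vertical simplicial structure *)
  Bh : nat -> Groupoid;
  eh : forall i : nat, nat -> Functor (Bh (S i)) (Bh i);
  th : forall i : nat, nat -> Functor (Bh i) (Bh (S i));
  aug_u : forall i, Functor (B i 0) (Bh i);
  aug_v : forall j, Functor (B 0 j) (Bv j)
}.

Definition is_v_augmentation (D : BisimpData)
  (E : forall i j : nat, nat -> Functor (B D (S i) j) (B D i j)) : Prop :=
  (forall j l, l <= S j -> aug_v D j \o hd D 0 j l =F dv D j l \o aug_v D (S j)) /\
  (forall j l, l <= j -> aug_v D (S j) \o hs D 0 j l =F sv D j l \o aug_v D j) /\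
  (forall j, aug_v D j \o E 0 j 0 =F aug_v D j \o E 0 j 1).

Definition is_u_augmentation (D : BisimpData) : Prop :=
  (forall i k, k <= S i -> aug_u D i \o ve D i 0 k =F eh D i k \o aug_u D (S i)) /\
  (forall i k, k <= i -> aug_u D (S i) \o vt D i 0 k =F th D i k \o aug_u D i) /\
  (forall i, aug_u D i \o hd D i 0 0 =F aug_u D i \o hd D i 0 1).

Definition is_aug_bisimplicial (D : BisimpData) : Prop :=
  (forall i, simplicial_ids (B D i) (hd D i) (hs D i)) /\
  (forall j, simplicial_ids (fun i => B D i j) (fun i => ve D i j) (fun i => vt D i j)) /\
  simplicial_ids (Bv D) (dv D) (sv D) /\
  simplicial_ids (Bh D) (eh D) (th D) /\
  (forall i j k l, k <= S i -> l <= S j ->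
     ve D i j k \o hd D (S i) j l =F hd D i j l \o ve D i (S j) k) /\
  (forall i j k l, k <= S i -> l <= j ->
     ve D i (S j) k \o hs D (S i) j l =F hs D i j l \o ve D i j k) /\
  (forall i j k l, k <= i -> l <= S j ->
     vt D i j k \o hd D i j l =F hd D (S i) j l \o vt D i (S j) k) /\
  (forall i j k l, k <= i -> l <= j ->
     vt D i (S j) k \o hs D i j l =F hs D (S i) j l \o vt D i j k) /\
  is_u_augmentation D /\
  is_v_augmentation D (ve D).

Definition is_abacus (D : BisimpData)
  (f : forall i j : nat, Functor (B D (S i) j) (B D i (S j))) : Prop :=
  (* f_{i,.} : B_{i+1,.} -> Dec_bot(B_{i,.}) is simplicial *)
  (forall i j k, k <= S j -> hd D i (S j) (S k) \o f i (S j) =F f i j \o hd D (S i) j k) /\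
  (forall i j k, k <= j -> hs D i (S j) (S k) \o f i j =F f i (S j) \o hs D (S i) j k) /\
  (* f_{.,j} : Dec_top(B_{.,j}) -> B_{.,j+1} commutes with all non-top structure maps *)
  (forall i j k, k <= i -> ve D i (S j) k \o f (S i) j =F f i j \o ve D (S i) j k) /\
  (forall i j k, k <= i -> vt D i (S j) k \o f i j =F f (S i) j \o vt D (S i) j k) /\
  (forall i j, hd D i j 0 \o f i j \o vt D i j i =F fidentity (B D i j)).

(* right augmentation f_{-1,j} : B_{0,j} -> B_{-1,j+1} *)
Definition is_right_augmentation (D : BisimpData)
  (f : forall i j : nat, Functor (B D (S i) j) (B D i (S j)))
  (fm1 : forall j : nat, Functor (B D 0 j) (Bv D (S j))) : Prop :=
  (forall j, fm1 j \o ve D 0 j 0 =F aug_v D (S j) \o f 0 j) /\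
  (forall j, dv D j 0 \o fm1 j =F aug_v D j).

Definition etilde (D : BisimpData)
  (f : forall i j : nat, Functor (B D (S i) j) (B D i (S j))) :
  forall i j : nat, nat -> Functor (B D (S i) j) (B D i j) :=
  fun i j k => if Nat.eqb k (S i) then hd D i j 0 \o f i j else ve D i j k.


(* On [B_{1,j}] the new top face is [d_0 o f_{0,j}], and the identity
   [v o d_0 o f_{0,j} = v o e_0] is obtained by pasting three commutative
   squares: [v] commutes with [d_0], [f_{-1,j} o e_0 = v o f_{0,j}], and
   [d_0 o f_{-1,j} = v].  Since [B~] only changes top vertical faces, the
   horizontal compatibilities of [v] are inherited from [B]. *)

Lemma hcast_trans {G : Groupoid} {a a' a'' b b' b'' : ob G}
  (p1 : a = a') (p2 : a' = a'') (q1 : b = b') (q2 : b' = b'') (h : hom a b) :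
  hcast (eq_trans p1 p2) (eq_trans q1 q2) h = hcast p2 q2 (hcast p1 q1 h).
Proof. destruct p2, q2. reflexivity. Qed.

Lemma hcast_sym {G : Groupoid} {a a' b b' : ob G} (p : a = a') (q : b = b')
  (h : hom a b) :
  hcast (eq_sym p) (eq_sym q) (hcast p q h) = h.
Proof. destruct p, q. reflexivity. Qed.

Lemma hcast_fmap {G H : Groupoid} (F : Functor G H) {a a' b b' : ob G}
  (p : a = a') (q : b = b') (h : hom a b) :
  hcast (f_equal (fobj F) p) (f_equal (fobj F) q) (fmap F h) = fmap F (hcast p q h).
Proof. destruct p, q. reflexivity. Qed.

Lemma feq_sym {G H} (F1 F2 : Functor G H) : F1 =F F2 -> F2 =F F1.
Proof.
  intros [p Hp]. exists (fun x => eq_sym (p x)). intros x y h.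
  rewrite <- Hp. apply hcast_sym.
Qed.

Lemma feq_trans {G H} (F1 F2 F3 : Functor G H) :
  F1 =F F2 -> F2 =F F3 -> F1 =F F3.
Proof.
  intros [p Hp] [q Hq]. exists (fun x => eq_trans (p x) (q x)). intros x y h.
  rewrite hcast_trans, Hp. apply Hq.
Qed.

Lemma feq_compl {G H K} (F : Functor H K) (F1 F2 : Functor G H) :
  F1 =F F2 -> F \o F1 =F F \o F2.
Proof.
  intros [p Hp]. exists (fun x => f_equal (fobj F) (p x)). intros x y h. simpl.
  rewrite hcast_fmap, Hp. reflexivity.
Qed.

Lemma feq_compr {G H K} (F1 F2 : Functor H K) (F : Functor G H) :
  F1 =F F2 -> F1 \o F =F F2 \o F.
Proof.
  intros [p Hp]. exists (fun x => p (fobj F x)). intros x y h. apply Hp.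
Qed.

Lemma fcompA {G H K L} (F3 : Functor K L) (F2 : Functor H K) (F1 : Functor G H) :
  F3 \o (F2 \o F1) =F (F3 \o F2) \o F1.
Proof. exists (fun x => eq_refl). reflexivity. Qed.

Lemma feq_paste {A B0 B1 V0 V1 : Groupoid}
  (e : Functor A B0) (f : Functor A B1) (d : Functor B1 B0)
  (v0 : Functor B0 V0) (v1 : Functor B1 V1) (dv : Functor V1 V0)
  (g : Functor B0 V1) :
  v0 \o d =F dv \o v1 -> g \o e =F v1 \o f -> dv \o g =F v0 ->
  v0 \o e =F v0 \o (d \o f).
Proof.
  intros Hd Hf Hg.
  apply feq_trans with (dv \o g \o e); [apply feq_compr, feq_sym, Hg |].
  apply feq_trans with (dv \o (g \o e)); [apply feq_sym, fcompA |].
  apply feq_trans with (dv \o (v1 \o f)); [apply feq_compl, Hf |].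
  apply feq_trans with (dv \o v1 \o f); [apply fcompA |].
  apply feq_trans with (v0 \o d \o f); [apply feq_compr, feq_sym, Hd |].
  apply feq_sym, fcompA.
Qed.

Theorem lemma2p4 (D : BisimpData)
  (f : forall i j : nat, Functor (B D (S i) j) (B D i (S j)))
  (fm1 : forall j : nat, Functor (B D 0 j) (Bv D (S j))) :
  is_aug_bisimplicial D ->
  is_abacus D f ->
  is_right_augmentation D f fm1 ->
  is_v_augmentation D (etilde D f) /\
  (forall j, aug_v D j \o ve D 0 j 0 =F aug_v D j \o etilde D f 0 j 1).
Proof.
  intros HB _ [Hfm1_e0 Hd0_fm1].
  destruct HB as (_ & _ & _ & _ & _ & _ & _ & _ & _ & Hv_d & Hv_s & _).
  assert (Hv_faces : forall j,
            aug_v D j \o ve D 0 j 0 =F aug_v D j \o etilde D f 0 j 1).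
  { intro j. apply feq_paste with (dv := dv D j 0) (v1 := aug_v D (S j)) (g := fm1 j).
    - apply Hv_d, le_0_n.
    - apply Hfm1_e0.
    - apply Hd0_fm1. }
  split; [split; [exact Hv_d | split; [exact Hv_s | exact Hv_faces]] | exact Hv_faces].
Qed.
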